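(* Let $A,B,A',B'$ be qubit systems, with Alice holding $AA'$ and Bob holding $BB'$. Define the Bell states $|\psi_{0,1}\rangle=\frac{1}{\sqrt2}(|00\rangle\pm|11\rangle)$, $|\psi_{2,3}\rangle=\frac{1}{\sqrt2}(|01\rangle\pm|10\rangle)$, and write $\psi_i=|\psi_i\rangle\langle\psi_i|$. Define $|\chi_\pm\rangle=\frac12\big(\sqrt{2\pm\sqrt2}\,|00\rangle\pm\sqrt{2\mp\sqrt2}\,|11\rangle\big)$ and $\chi_\pm=|\chi_\pm\rangle\langle\chi_\pm|$. Let $p\in[0,1]$, $\kappa\in[0,1]$, $q_0=q_1=p/2$, $q_2=q_3=(1-p)/2$, and $\rho^{(0)}=\frac12(|00\rangle\langle00|+\psi_2)$, $\rho^{(1)}=\frac12(|11\rangle\langle11|+\psi_3)$, $\rho^{(2)}=\chi_+$, $\rho^{(3)}=\chi_-$ (states on $A'B'$). Let $$\rho_H=(1-\kappa)\sum_{i=0}^3 q_i\,\psi_{i,AB}\otimes\rho^{(i)}_{A'B'}+\kappa\,\frac{I}{16}.$$ Then there exists a unitary of the form $U=\sum_{i,j\in\{0,1\}}|ij\rangle\langle ij|_{AB}\otimes U_{ij,A'B'}$ with each $U_{ij}$ unitary on $A'B'$, such that $$\mathrm{Tr}_{A'B'}\big[U\rho_H U^\dagger\big]=(1-\kappa)\big(p\,\psi_0+(1-p)\,\psi_2\big)+\kappa\,\frac{I}{4}.$$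
   Context: $\{|0\rangle,|1\rangle\}$ denotes the computational basis of each qubit; $|ij\rangle=|i\rangle_A|j\rangle_B$. $I$ denotes the identity operator on the relevant space ($I/16$ is the maximally mixed state on $ABA'B'$, $I/4$ on $AB$). *)

From HB Require Import structures.
From mathcomp Require Import all_boot all_order all_algebra all_field.
From mathcomp Require Import spectral.
Set Implicit Arguments. Unset Strict Implicit. Unset Printing Implicit Defensive.
Import Order.TTheory GRing.Theory Num.Theory.
Local Open Scope ring_scope.
Local Open Scope sesquilinear_scope.

(* The four-qubit system ABA'B' is
   ordered as (AB) (x) (A'B'), basis index 4*(2a+b) + (2a'+b') : 'I_16. *)

Definition ket2 (i j : nat) : 'cV[algC]_4 := delta_mx (inord (2*i + j)) 0.

Definition proj (v : 'cV[algC]_4) : 'M[algC]_4 := v *m v ^t*.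

Definition s2 : algC := sqrtC 2.

Definition psi0 : 'cV[algC]_4 := s2^-1 *: (ket2 0 0 + ket2 1 1).
Definition psi1 : 'cV[algC]_4 := s2^-1 *: (ket2 0 0 - ket2 1 1).
Definition psi2 : 'cV[algC]_4 := s2^-1 *: (ket2 0 1 + ket2 1 0).
Definition psi3 : 'cV[algC]_4 := s2^-1 *: (ket2 0 1 - ket2 1 0).

Definition psi (i : 'I_4) : 'cV[algC]_4 :=
  match val i with 0 => psi0 | 1 => psi1 | 2 => psi2 | _ => psi3 end.

Definition chip : 'cV[algC]_4 :=
  2^-1 *: (sqrtC (2 + s2) *: ket2 0 0 + sqrtC (2 - s2) *: ket2 1 1).
Definition chim : 'cV[algC]_4 :=
  2^-1 *: (sqrtC (2 - s2) *: ket2 0 0 - sqrtC (2 + s2) *: ket2 1 1).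

Definition rho (i : 'I_4) : 'M[algC]_4 :=
  match val i with
  | 0 => 2^-1 *: (proj (ket2 0 0) + proj psi2)
  | 1 => 2^-1 *: (proj (ket2 1 1) + proj psi3)
  | 2 => proj chip
  | _ => proj chim
  end.

Definition q (p : algC) (i : 'I_4) : algC :=
  if (val i < 2)%N then p / 2 else (1 - p) / 2.

Definition idx (x y : 'I_4) : 'I_16 := inord (4 * x + y).

Definition kron (A B : 'M[algC]_4) : 'M[algC]_16 :=
  \matrix_(r, c) \sum_(x < 4) \sum_(y < 4) \sum_(x' < 4) \sum_(y' < 4)
     (if (r == idx x y) && (c == idx x' y') then A x x' * B y y' else 0).

Definition ptrace2 (M : 'M[algC]_16) : 'M[algC]_4 :=
  \matrix_(x, x') \sum_(y < 4) M (idx x y) (idx x' y).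

Definition rhoH (p kappa : algC) : 'M[algC]_16 :=
  (1 - kappa) *: (\sum_(i < 4) q p i *: kron (proj (psi i)) (rho i))
  + kappa *: ((16%:R)^-1 *: 1%:M).

Definition controlled (Uf : 'I_4 -> 'M[algC]_4) : 'M[algC]_16 :=
  \sum_(x < 4) kron (delta_mx x x) (Uf x).

From mathcomp Require Import all_boot all_order all_algebra all_field.
From mathcomp Require Import spectral zify ring.
Import Order.TTheory GRing.Theory Num.Theory.
Local Open Scope ring_scope.
Local Open Scope sesquilinear_scope.

(* Conjugation by a controlled unitary acts blockwise on AB: entry (x, x') of
   the reduced state is Tr(U_x B_xx' U_x'^+), where B_xx' is the (x, x') block
   of rho_H over A'B'.  The noise part is left unchanged, and the Bell part
   contributes q_i <x|psi_i><psi_i|x'> Tr(U_x'^+ U_x rho^(i)).  Take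
   U_00 = |00><00| + |01><10| + |10><01| - |11><11|, U_01 the Hadamard gate on
   span{|00>, |11>} (identity on |01>, |10>), and U_10 = U_11 = I.  Since
   rho^(0), rho^(1) lie in the +1, -1 eigenspaces of U_00 and chi_+, chi_- in
   those of U_01, the trace equals the sign of <x|psi_i><psi_i|x'> wherever this
   coefficient is nonzero; this turns psi_1 into psi_0 and psi_3 into psi_2. *)

Lemma idx_val (x y : 'I_4) : (idx x y : nat) = (4 * x + y)%N.
Proof. by rewrite inordK //; have := ltn_ord x; have := ltn_ord y; lia. Qed.

Lemma eq_idx (x y x' y' : 'I_4) :
  (idx x y == idx x' y') = (x == x') && (y == y').
Proof.
rewrite -val_eqE /= !idx_val.
have := ltn_ord x; have := ltn_ord y; have := ltn_ord x'; have := ltn_ord y'.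
case: (x =P x') => [->|/eqP]; first by rewrite eqn_add2l.
by rewrite -val_eqE /= => *; apply/eqP; lia.
Qed.

Lemma big_idx (V : nmodType) (F : 'I_16 -> V) :
  \sum_k F k = \sum_x \sum_y F (idx x y).
Proof.
rewrite pair_big /= (reindex (fun xy : 'I_4 * 'I_4 => idx xy.1 xy.2)) //.
exists (fun k : 'I_16 => (inord (k %/ 4) : 'I_4, inord (k %% 4) : 'I_4)).
  move=> [x y] _ /=; have := ltn_ord x; have := ltn_ord y => *.
  by congr pair; apply: val_inj; rewrite /= inordK idx_val; lia.
move=> k _; have := ltn_ord k => k_lt16.
by apply: val_inj; rewrite /= idx_val !inordK; lia.
Qed.

Lemma kron_idx A B (x y x' y' : 'I_4) :
  kron A B (idx x y) (idx x' y') = A x x' * B y y'.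
Proof.
rewrite mxE (big_only1 x) // => [|a ax _]; last first.
  by do 3!(rewrite big1 // => ? _); rewrite !eq_idx [x == a]eq_sym (negbTE ax).
rewrite (big_only1 y) // => [|b yb _]; last first.
  do 2!(rewrite big1 // => ? _).
  by rewrite !eq_idx [y == b]eq_sym (negbTE yb) andbF.
rewrite (big_only1 x') // => [|a xa _]; last first.
  by rewrite big1 // => ? _; rewrite !eq_idx [x' == a]eq_sym (negbTE xa) andbF.
rewrite (big_only1 y') // => [|b yb _]; last first.
  by rewrite !eq_idx [y' == b]eq_sym (negbTE yb) !andbF.
by rewrite !eq_idx !eqxx.
Qed.

Lemma controlled_idx U (x y x' y' : 'I_4) :
  controlled U (idx x y) (idx x' y') = (x == x')%:R * U x y y'.
Proof.
rewrite summxE (big_only1 x) // => [|z /negbTE xz _].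
  by rewrite kron_idx mxE eqxx [x' == x]eq_sym.
by rewrite kron_idx mxE [x == z]eq_sym xz mul0r.
Qed.

Lemma controlled_mulmx_idx U (M : 'M[algC]_16) (x y : 'I_4) c :
  (controlled U *m M) (idx x y) c = \sum_y' U x y y' * M (idx x y') c.
Proof.
rewrite mxE big_idx (big_only1 x) // => [|z /negbTE xz _].
  by apply: eq_bigr => y' _; rewrite controlled_idx eqxx mul1r.
by rewrite big1 // => y' _; rewrite controlled_idx [x == z]eq_sym xz !mul0r.
Qed.

Definition block_AB (M : 'M[algC]_16) (x x' : 'I_4) : 'M[algC]_4 :=
  \matrix_(y, y') M (idx x y) (idx x' y').

Lemma ptrace2_controlled U M (x x' : 'I_4) :
  ptrace2 (controlled U *m M *m (controlled U)^t*) x x' =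
  \tr (U x *m block_AB M x x' *m (U x')^t*).
Proof.
rewrite mxE; apply: eq_bigr => y _.
rewrite mxE big_idx (big_only1 x') // => [|z /negbTE xz _]; last first.
  by rewrite big1 // => y' _; rewrite !mxE controlled_idx [x' == z]eq_sym xz
    mul0r rmorph0 mulr0.
rewrite mxE; apply: eq_bigr => y' _.
rewrite [in RHS]mxE controlled_mulmx_idx !mxE controlled_idx eqxx mul1r.
by congr (_ * _); apply: eq_bigr => b _; rewrite mxE.
Qed.

Lemma block_AB_rhoH p k (x x' : 'I_4) : block_AB (rhoH p k) x x' =
  (1 - k) *: \sum_i (q p i * proj (psi i) x x') *: rho i
  + (k / 16%:R * (x == x')%:R) *: 1%:M.
Proof.
apply/matrixP => y y'; rewrite [LHS]mxE /rhoH [LHS]mxE [RHS]mxE.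
congr (_ + _); last by rewrite !mxE eq_idx -mulnb natrM !mulrA.
rewrite mxE [RHS]mxE !summxE; congr (_ * _); apply: eq_bigr => i _.
by rewrite mxE kron_idx [RHS]mxE mulrA.
Qed.

Lemma mxtrace_unitary_conj (C : numClosedFieldType) n (U R : 'M[C]_n) :
  U \is unitarymx -> \tr (U *m R *m U^t*) = \tr R.
Proof.
by move=> Uu; rewrite mxtrace_mulC mulmxA -[U^t*]mul1mx mulmxKtV ?mul1mx.
Qed.

Lemma ptrace2_controlled_rhoH (U : 'I_4 -> 'M[algC]_4) p k (x x' : 'I_4) :
  (forall z, U z \is unitarymx) ->
  ptrace2 (controlled U *m rhoH p k *m (controlled U)^t*) x x' =
  (1 - k) * \sum_i q p i * proj (psi i) x x' * \tr (U x *m rho i *m (U x')^t*)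
  + k / 4 * (x == x')%:R.
Proof.
move=> Uu; rewrite ptrace2_controlled block_AB_rhoH.
rewrite mulmxDr mulmxDl mxtraceD -!scalemxAr -!scalemxAl !mxtraceZ.
rewrite mulmx_sumr mulmx_suml raddf_sum mulmx1; congr (_ * _ + _).
  by apply: eq_bigr => i _; rewrite -scalemxAr -scalemxAl; exact: mxtraceZ.
have [<-|_] := eqVneq x x'; last by rewrite !mulr0 mul0r.
by rewrite (unitarymxP (Uu x)) mxtrace1; field.
Qed.

Lemma s2_ge0 : 0 <= s2. Proof. by rewrite sqrtC_ge0 ler0n. Qed.
Lemma s2_neq0 : s2 != 0. Proof. by rewrite sqrtC_eq0 pnatr_eq0. Qed.
Lemma sqr_s2 : s2 ^+ 2 = 2. Proof. exact: sqrtCK. Qed.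
Lemma conj_s2 : s2^* = s2. Proof. exact/conj_Creal/ger0_real/s2_ge0. Qed.

Lemma s2_le2 : s2 <= 2.
Proof.
rewrite -(ler_pXn2r (isT : (0 < 2)%N)) ?nnegrE ?s2_ge0 ?ler0n //.
by rewrite sqr_s2 expr2 -natrM ler_nat.
Qed.

Definition sqrt2p : algC := sqrtC (2 + s2).
Definition sqrt2m : algC := sqrtC (2 - s2).

Lemma sqrt2p_ge0 : 0 <= sqrt2p.
Proof. by rewrite sqrtC_ge0 addr_ge0 ?ler0n ?s2_ge0. Qed.

Lemma sqrt2m_ge0 : 0 <= sqrt2m.
Proof. by rewrite sqrtC_ge0 subr_ge0 s2_le2. Qed.

Lemma sqr_sqrt2p : sqrt2p ^+ 2 = 2 + s2. Proof. exact: sqrtCK. Qed.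

Lemma sqr_sqrt2m : sqrt2m ^+ 2 = 2 - s2. Proof. exact: sqrtCK. Qed.

Lemma conj_sqrt2p : sqrt2p^* = sqrt2p.
Proof. exact/conj_Creal/ger0_real/sqrt2p_ge0. Qed.

Lemma conj_sqrt2m : sqrt2m^* = sqrt2m.
Proof. exact/conj_Creal/ger0_real/sqrt2m_ge0. Qed.

Lemma sqrt2p_sqrt2m : sqrt2p * sqrt2m = s2.
Proof.
rewrite -sqrtCM ?nnegrE ?subr_ge0 ?s2_le2 ?addr_ge0 ?ler0n ?s2_ge0 //.
suff -> : (2 + s2) * (2 - s2) = 2 by [].
by rewrite mulrC -subr_sqr sqr_s2 expr2 -natrM -natrB.
Qed.

Ltac case_ord4 k := case: k => [[|[|[|[|//]]]] ?].

Lemma eq_inord4 (k : 'I_4) n : (n < 4)%N -> (k == inord n) = (k == n :> nat).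
Proof. by move=> n_lt4; rewrite -val_eqE /= inordK. Qed.

Lemma projE (v : 'cV[algC]_4) k l : proj v k l = v k 0 * (v l 0)^*.
Proof. by rewrite /proj mxE big_ord1 !mxE. Qed.

Definition bell_sign (i k : nat) : algC :=
  match i, k with
  | 0, 0 | 0, 3 | 1, 0 | 2, 1 | 2, 2 | 3, 1 => 1
  | 1, 3 | 3, 2 => -1
  | _, _ => 0
  end.

Lemma conj_bell_sign i k : (bell_sign i k)^* = bell_sign i k.
Proof.
do 4?[case: i => [|i]]; do 4?[case: k => [|k]];
  by rewrite /= ?rmorph0 ?rmorph1 ?rmorphN1.
Qed.

Lemma psiE (i k : 'I_4) : psi i k 0 = s2^-1 * bell_sign i k.
Proof.
by case_ord4 i; rewrite /= !mxE !eq_inord4 //; case_ord4 k; rewrite /=; ring.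
Qed.

Lemma proj_psiE (i k l : 'I_4) :
  proj (psi i) k l = 2^-1 * (bell_sign i k * bell_sign i l).
Proof.
rewrite projE !psiE rmorphM fmorphV /= conj_bell_sign conj_s2.
by rewrite -sqr_s2 expr2 invfM; ring.
Qed.

Lemma proj_psi0E k l : proj psi0 k l = 2^-1 * (bell_sign 0 k * bell_sign 0 l).
Proof. exact: (proj_psiE (Ordinal (isT : (0 < 4)%N))). Qed.

Lemma proj_psi2E k l : proj psi2 k l = 2^-1 * (bell_sign 2 k * bell_sign 2 l).
Proof. exact: (proj_psiE (Ordinal (isT : (2 < 4)%N))). Qed.

Lemma proj_psi3E k l : proj psi3 k l = 2^-1 * (bell_sign 3 k * bell_sign 3 l).
Proof. exact: (proj_psiE (Ordinal (isT : (3 < 4)%N))). Qed.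

Definition rho_entry (i k l : nat) : algC :=
  match i, k, l with
  | 0, 0, 0 | 1, 3, 3 => 2^-1
  | 0, 1, 1 | 0, 1, 2 | 0, 2, 1 | 0, 2, 2 | 1, 1, 1 | 1, 2, 2 => 4^-1
  | 1, 1, 2 | 1, 2, 1 => - 4^-1
  | 2, 0, 0 | 3, 3, 3 => (2 + s2) / 4
  | 2, 3, 3 | 3, 0, 0 => (2 - s2) / 4
  | 2, 0, 3 | 2, 3, 0 => s2 / 4
  | 3, 0, 3 | 3, 3, 0 => - s2 / 4
  | _, _, _ => 0
  end.

Lemma rhoE (i k l : 'I_4) : rho i k l = rho_entry i k l.
Proof.
case_ord4 i; rewrite /rho /=.
- rewrite mxE [X in _ * X]mxE projE proj_psi2E !mxE !eq_inord4 //.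
  by case_ord4 k; case_ord4 l; rewrite /= ?rmorph0 ?rmorph1; field.
- rewrite mxE [X in _ * X]mxE projE proj_psi3E !mxE !eq_inord4 //.
  by case_ord4 k; case_ord4 l; rewrite /= ?rmorph0 ?rmorph1; field.
- rewrite projE /chip !mxE !eq_inord4 // -/sqrt2p -/sqrt2m.
  case_ord4 k; case_ord4 l; rewrite /= ?(mulr1, mulr0, addr0, add0r);
    rewrite ?(rmorphM, fmorphV, rmorph_nat, rmorph0) /=;
    rewrite ?conj_sqrt2p ?conj_sqrt2m;
    by rewrite -?sqr_sqrt2p -?sqr_sqrt2m -?sqrt2p_sqrt2m; field.
- rewrite projE /chim !mxE !eq_inord4 // -/sqrt2p -/sqrt2m.
  case_ord4 k; case_ord4 l; rewrite /= ?(mulr1, mulr0, subr0, sub0r, addr0);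
    rewrite ?(rmorphM, rmorphN, fmorphV, rmorph_nat, rmorph0) /=;
    rewrite ?conj_sqrt2p ?conj_sqrt2m;
    by rewrite -?sqr_sqrt2p -?sqr_sqrt2m -?sqrt2p_sqrt2m; field.
Qed.

Lemma mxtrace_rho i : \tr (rho i) = 1.
Proof.
rewrite /mxtrace !big_ord_recr big_ord0 /= !rhoE.
by case_ord4 i; rewrite /=; field.
Qed.

Definition U00 : 'M[algC]_4 := \matrix_(k, l)
  match k : nat, l : nat with
  | 0, 0 | 1, 2 | 2, 1 => 1
  | 3, 3 => -1
  | _, _ => 0
  end.

Definition U01 : 'M[algC]_4 := \matrix_(k, l)
  match k : nat, l : nat with
  | 0, 0 | 0, 3 | 3, 0 => s2^-1
  | 3, 3 => - s2^-1
  | 1, 1 | 2, 2 => 1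
  | _, _ => 0
  end.

Lemma U00_herm : U00^t* = U00.
Proof.
apply/matrixP => k l; rewrite !mxE.
by case_ord4 k; case_ord4 l; rewrite /= ?rmorph0 ?rmorph1 ?rmorphN1.
Qed.

Lemma U01_herm : U01^t* = U01.
Proof.
apply/matrixP => k l; rewrite !mxE.
case_ord4 k; case_ord4 l;
  by rewrite /= ?rmorph0 ?rmorph1 ?rmorphN ?fmorphV /= ?conj_s2.
Qed.

Lemma U00_unitary : U00 \is unitarymx.
Proof.
apply/unitarymxP; rewrite U00_herm; apply/matrixP => k l.
rewrite !mxE !big_ord_recr big_ord0 /= !mxE.
by case_ord4 k; case_ord4 l; rewrite /=; ring.
Qed.

Lemma U01_unitary : U01 \is unitarymx.
Proof.
apply/unitarymxP; rewrite U01_herm; apply/matrixP => k l.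
rewrite !mxE !big_ord_recr big_ord0 /= !mxE.
case_ord4 k; case_ord4 l; rewrite /= ?mulrN ?mulNr ?opprK;
  by rewrite -?invfM -?expr2 ?sqr_s2; field; rewrite ?s2_neq0.
Qed.

Lemma mxtrace_U00_rho (i : 'I_4) :
  bell_sign i 0 * bell_sign i 3 * \tr (U00 *m rho i) =
  (bell_sign i 0 * bell_sign i 3) ^+ 2.
Proof.
rewrite /mxtrace !big_ord_recr big_ord0 /= !mxE !big_ord_recr !big_ord0 /=.
rewrite !rhoE !mxE.
by case_ord4 i; rewrite /=; field.
Qed.

Lemma mxtrace_U01_rho (i : 'I_4) :
  bell_sign i 1 * bell_sign i 2 * \tr (U01 *m rho i) =
  (bell_sign i 1 * bell_sign i 2) ^+ 2.
Proof.
rewrite /mxtrace !big_ord_recr big_ord0 /= !mxE !big_ord_recr !big_ord0 /=.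
rewrite !rhoE !mxE.
by case_ord4 i; rewrite /=; field; rewrite s2_neq0.
Qed.

Definition Ucorr (x : 'I_4) : 'M[algC]_4 :=
  match x : nat with 0 => U00 | 1 => U01 | _ => 1%:M end.

Lemma trmxC1 : (1%:M : 'M[algC]_4)^t* = 1%:M.
Proof. by rewrite trmx1 map_mx1. Qed.

Lemma Ucorr_unitary x : Ucorr x \is unitarymx.
Proof.
case_ord4 x; rewrite /Ucorr /= ?U00_unitary ?U01_unitary //.
all: by apply/unitarymxP; rewrite trmxC1 mulmx1.
Qed.

Lemma mxtrace_Ucorr_rho (i x x' : 'I_4) :
  bell_sign i x * bell_sign i x' * \tr (Ucorr x *m rho i *m (Ucorr x')^t*) =
  (bell_sign i x * bell_sign i x') ^+ 2.
Proof.
have tr_diag y : \tr (Ucorr y *m rho i *m (Ucorr y)^t*) = 1.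
  by rewrite mxtrace_unitary_conj ?Ucorr_unitary ?mxtrace_rho.
case_ord4 x; case_ord4 x'; rewrite ?tr_diag {tr_diag} /Ucorr /=.
all: rewrite ?trmxC1 ?U00_herm ?U01_herm ?mulmx1 ?mul1mx.
all: try by case_ord4 i; rewrite /=; ring.
- exact: mxtrace_U00_rho.
- exact: mxtrace_U01_rho.
- by rewrite mxtrace_mulC (mulrC (bell_sign i 2)); exact: mxtrace_U01_rho.
- by rewrite mxtrace_mulC (mulrC (bell_sign i 3)); exact: mxtrace_U00_rho.
Qed.

Definition psi_corr (i : 'I_4) : 'cV[algC]_4 :=
  if (i < 2)%N then psi0 else psi2.

Lemma sqr_bell_sign (i k : 'I_4) :
  bell_sign i k ^+ 2 = bell_sign (if (i < 2)%N then 0 else 2) k.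
Proof.
by case_ord4 i; case_ord4 k; rewrite /= ?expr1n ?sqrrN ?expr1n ?expr0n.
Qed.

Lemma proj_psi_corrE (i k l : 'I_4) :
  proj (psi_corr i) k l = 2^-1 * (bell_sign i k * bell_sign i l) ^+ 2.
Proof.
rewrite exprMn !sqr_bell_sign /psi_corr.
by case: ifP => _; [exact: proj_psi0E | exact: proj_psi2E].
Qed.

Lemma proj_psi_Ucorr (i x x' : 'I_4) :
  proj (psi i) x x' * \tr (Ucorr x *m rho i *m (Ucorr x')^t*) =
  proj (psi_corr i) x x'.
Proof. by rewrite proj_psiE proj_psi_corrE -mulrA mxtrace_Ucorr_rho. Qed.

Lemma sum_q_proj_psi_corr p :
  \sum_i q p i *: proj (psi_corr i) = p *: proj psi0 + (1 - p) *: proj psi2.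
Proof.
rewrite !big_ord_recr big_ord0 /= /q /psi_corr /=.
rewrite add0r -scalerDl -addrA -scalerDl.
by congr (_ *: _ + _ *: _); field.
Qed.

Theorem mainTheorem1 (p kappa : algC) :
  0 <= p <= 1 -> 0 <= kappa <= 1 ->
  exists Uf : 'I_4 -> 'M[algC]_4,
    (forall x, Uf x \is unitarymx) /\
    ptrace2 (controlled Uf *m rhoH p kappa *m (controlled Uf)^t*)
    = (1 - kappa) *: (p *: proj psi0 + (1 - p) *: proj psi2)
      + kappa *: ((4%:R)^-1 *: 1%:M).
Proof.
(* The identity is polynomial in p and kappa; their ranges are irrelevant. *)
move=> _ _; exists Ucorr; split; first exact: Ucorr_unitary.
apply/matrixP => x x'.
rewrite ptrace2_controlled_rhoH; last exact: Ucorr_unitary.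
under eq_bigr do rewrite -mulrA proj_psi_Ucorr.
rewrite -sum_q_proj_psi_corr mxE; congr (_ + _).
  rewrite mxE summxE; congr (_ * _); apply: eq_bigr => i _; by rewrite [RHS]mxE.
by rewrite !mxE mulrA.
Qed.
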